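(* Let $N\ge2$ and $P\ge0$ be integers and let $\lambda$ be an element of a commutative ring. Then $\mathbb{HD}^P_{N+1}(\lambda)$ is the coefficient of the monomial $\prod_{i=0}^Nx_i^P$ in the polynomial \[ \Big(\lambda\sum_{i=0}^Nx_i^{N+1}-(N+1)\prod_{i=0}^Nx_i\Big)^{P}. \]
   Context: For natural numbers $P,M$ the Hasse--Dwork polynomial is \[ \mathbb{HD}^P_M(X)=(-M)^P\Big(1+M!\sum_{i=1}^{[P/M]}\binom{P}{M\times i}\Big(\frac{X}{-M}\Big)^{iM}\Big), \] where $M!\binom{P}{M\times i}=\binom{P}{i}\binom{P-i}{i}\binom{P-2i}{i}\cdots\binom{P-(M-1)i}{i}$; equivalently $\mathbb{HD}^P_M(X)=\sum_{i=0}^{[P/M]}M!\binom{P}{M\times i}(-M)^{P-iM}X^{iM}$, a polynomial with integer coefficients. *)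

From HB Require Import structures.
From mathcomp Require Import all_boot all_order all_algebra.
From mathcomp Require Export mpoly.
Set Implicit Arguments. Unset Strict Implicit. Unset Printing Implicit Defensive.
Import Order.TTheory GRing.Theory Num.Theory.
Local Open Scope ring_scope.

(* M! binom(P; M x i) = C(P,i) C(P-i,i) ... C(P-(M-1)i, i) *)
Definition multibinom (P M i : nat) : nat :=
  (\prod_(j < M) 'C(P - j * i, i))%N.

Definition HD (P M : nat) : {poly int} :=
  \sum_(i < (P %/ M).+1)
     ((multibinom P M i)%:Z * (- (M%:Z)) ^+ (P - i * M)) *: 'X^(i * M).

Definition HD_eval (R : comRingType) (P M : nat) (x : R) : R :=
  (map_poly intr (HD P M)).[x].

From HB Require Import structures.
From mathcomp Require Import all_boot all_order all_algebra.
From mathcomp Require Import mpoly ring zify.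
Import GRing.Theory.
Local Open Scope ring_scope.

(* Expand (lambda S - (N+1) Q)^P binomially, with S = sum_i x_i^(N+1) and
   Q = prod_i x_i.  The k-th term contributes lambda^k times the coefficient of
   x^(k,...,k) in S^k, which vanishes unless k = (N+1) a, and is then the
   multinomial coefficient k! / (a!)^(N+1) = prod_(j <= N) C(k - j a, a).
   Splitting C(P, k) off (N+1)! binom(P; (N+1) x a) matches these terms with
   those of HD^P_(N+1). *)

Lemma mul_bin_sub (n a b : nat) : (a + b <= n)%N ->
  ('C(n, a) * 'C(n - a, b) = 'C(n, a + b) * 'C(a + b, a))%N.
Proof.
move=> le_abn; have le_an : (a <= n)%N by lia.
have facts_gt0 : (0 < a`! * b`! * (n - (a + b))`!)%N by rewrite !muln_gt0 !fact_gt0.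
apply/eqP; rewrite -(eqn_pmul2r facts_gt0); apply/eqP; transitivity n`!.
  have le_bna : (b <= n - a)%N by lia.
  have := bin_fact le_bna; rewrite -subnDA => fact_na.
  by rewrite -(bin_fact le_an) -fact_na; ring.
have := bin_fact (leq_addr b a); rewrite addKn => fact_ab.
by rewrite -(bin_fact le_abn) -fact_ab; ring.
Qed.

Lemma multibinomS (P M i : nat) :
  multibinom P M.+1 i = ('C(P, i) * multibinom (P - i) M i)%N.
Proof.
rewrite /multibinom big_ord_recl mul0n subn0; congr (_ * _)%N.
by apply: eq_bigr => j _; rewrite lift0 mulSn subnDA.
Qed.

Lemma multibinom_split (P M i : nat) : (i * M <= P)%N ->
  multibinom P M i = ('C(P, i * M) * multibinom (i * M) M i)%N.
Proof.
elim: M P => [|M IH] P le_iMP; first by rewrite /multibinom !big_ord0 muln0 bin0.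
rewrite !multibinomS IH; last by rewrite mulnS in le_iMP; lia.
rewrite mulnA mul_bin_sub; last by rewrite -mulnS.
by rewrite mulnS addKn mulnA.
Qed.

Lemma mcoeffMXE (R : comRingType) n (p : {mpoly R[n]}) u m :
  (p * 'X_[u])@_m = if (u <= m)%MM then p@_(m - u) else 0.
Proof.
case: ifP => [le_um | le_umF]; first by rewrite -{1}(submK le_um) addmC mcoeffMX.
apply/eqP; rewrite mcoeff_eq0 (perm_mem (msuppMX p u)); apply/negP.
by case/mapP => m' _ em; rewrite em lem_addr in le_umF.
Qed.

Section PowerSum.
Variables (R : comRingType) (n M : nat).
Hypothesis M_gt0 : (0 < M)%N.

Definition power_sum c : {mpoly R[n]} := \sum_(i < n | (i < c)%N) 'X_i ^+ M.

Definition mnm_prefix c b : 'X_{1..n} := [multinom (if (i < c)%N then b else 0%N) | i < n].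

Lemma power_sum0 : power_sum 0 = 0.
Proof. by rewrite /power_sum big_pred0. Qed.

Lemma power_sumS (i : 'I_n) : power_sum i.+1 = 'X_i ^+ M + power_sum i.
Proof.
rewrite /power_sum (bigD1 i) //=; congr (_ + _); apply: eq_bigl => j.
by rewrite ltnS ltn_neqAle andbC.
Qed.

Lemma mpolyXMn (i : 'I_n) k : ('X_i ^+ M) ^+ k = 'X_[U_(i) *+ M *+ k] :> {mpoly R[n]}.
Proof. by rewrite !mpolyXn. Qed.

(* Every monomial of [power_sum c ^+ k] is a sum of [U_(i) *+ M] with [i < c]. *)
Lemma mcoeff_power_sum_eq0 c (closed : pred 'X_{1..n}) :
  closed 0%MM ->
  (forall (i : 'I_n) m, (i < c)%N -> closed m -> closed (m + U_(i) *+ M)%MM) ->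
  forall k m, ~~ closed m -> (power_sum c ^+ k)@_m = 0.
Proof.
move=> closed0 closedD; elim=> [|k IHk] m not_closed_m.
  by rewrite expr0 mcoeff1; case: eqP not_closed_m => // ->; rewrite closed0.
rewrite exprSr mulr_sumr raddf_sum big1 //= => i lt_ic.
rewrite -[_ ^+ M]expr1 mpolyXMn mulm1n mcoeffMXE; case: ifP => // le_m.
apply: IHk; apply: contra not_closed_m => /(closedD _ _ lt_ic).
by rewrite submK.
Qed.

Lemma mcoeff_XMn_power_sum (i : 'I_n) l j a :
  (('X_i ^+ M) ^+ l * power_sum i ^+ j)@_(mnm_prefix i.+1 (M * a)) =
  if l == a then (power_sum i ^+ j)@_(mnm_prefix i (M * a)) else 0.
Proof.
have UE k : (U_(i) *+ M *+ l)%MM k = if i == k then (M * l)%N else 0%N.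
  by rewrite !mulmnE mnm1E; case: eqP; lia.
rewrite mulrC mpolyXMn mcoeffMXE; case: (ltngtP l a) => [lt_la | gt_la | <-].
- case: ifP => // _; apply: (@mcoeff_power_sum_eq0 i (fun m => m i == 0%N)).
  + by rewrite mnm0E.
  + move=> i' m lt_i'i /eqP mi0 /=; rewrite mnmDE mulmnE mnm1E mi0.
    by rewrite (_ : i' == i = false) //; apply: contraTF lt_i'i => /eqP ->; rewrite ltnn.
  + by rewrite /= mnmBE UE mnmE eqxx ltnSn subn_eq0 -ltnNge ltn_pmul2l.
- rewrite ifF //; apply/negP => /mnm_lepP /(_ i).
  by rewrite UE mnmE eqxx ltnSn leq_pmul2l // leqNgt gt_la.
- rewrite ifT; last first.
    by apply/mnm_lepP => k; rewrite UE !mnmE; case: eqP => [<-|]; rewrite ?ltnSn.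
  congr (_ @_ _); apply/mnmP => k; rewrite mnmBE UE !mnmE ltnS.
  case: (eqVneq i k) => [<-|ne_ik]; first by rewrite leqnn ltnn subnn.
  by rewrite subn0 leq_eqVlt val_eqE eq_sym (negbTE ne_ik).
Qed.

Lemma mcoeff_power_sum_prefix c k a : (c <= n)%N ->
  (power_sum c ^+ k)@_(mnm_prefix c (M * a)) =
  if k == (c * a)%N then (multibinom k c a)%:R else 0.
Proof.
elim: c k => [|c IHc] k lt_cn.
  have -> : mnm_prefix 0 (M * a) = 0%MM by apply/mnmP => i; rewrite !mnmE.
  rewrite power_sum0 mul0n; case: k => [|k]; last by rewrite expr0n mcoeff0.
  by rewrite expr0 mcoeff1 eqxx /multibinom big_ord0.
rewrite (power_sumS (Ordinal lt_cn)) addrC exprDn raddf_sum /=.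
under eq_bigr do rewrite mcoeffMn mulrC (mcoeff_XMn_power_sum (Ordinal lt_cn)).
under eq_bigr => l _ do rewrite (fun_if (fun x => x *+ 'C(k, l))) mul0rn.
rewrite -big_mkcond.
rewrite (big_ord1_eq _ (fun l => (power_sum c ^+ (k - l))@_(mnm_prefix c (M * a)) *+ 'C(k, l))).
rewrite ltnS; case: (leqP a k) => [le_ak | lt_ka].
  rewrite IHc ?(ltnW lt_cn) // (_ : (k - a == c * a) = (k == c.+1 * a))%N.
    by case: ifP => _; rewrite ?mul0rn // multibinomS natrM mulr_natl.
  by rewrite mulSn; apply/eqP/eqP; lia.
by rewrite ifF //; apply/negbTE; rewrite mulSn; lia.
Qed.

End PowerSum.

Lemma mcoeff_power_sum_diag (R : comRingType) (M k : nat) : (0 < M)%N ->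
  ((\sum_(i < M) 'X_i ^+ M : {mpoly R[M]}) ^+ k)@_[multinom k | i < M] =
  if (M %| k)%N then (multibinom k M (k %/ M))%:R else 0.
Proof.
move=> M_gt0; have -> : \sum_(i < M) 'X_i ^+ M = power_sum R M M M.
  by apply: eq_bigl => i; rewrite ltn_ord.
case: ifP => [dvd_Mk | ndvd_Mk].
  have -> : [multinom k | _ < M] = mnm_prefix M M (M * (k %/ M)).
    by apply/mnmP => i; rewrite !mnmE ltn_ord mulnC divnK.
  by rewrite mcoeff_power_sum_prefix // mulnC divnK // eqxx.
apply: (@mcoeff_power_sum_eq0 R M M M (fun m => [forall i, M %| m i]%N)).
- by apply/forallP => i; rewrite mnm0E dvdn0.
- move=> i m _ /forallP dvd_m; apply/forallP => j.
  by rewrite mnmDE mulmnE dvdn_add // dvdn_mull.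
- by apply/forallP => /(_ (Ordinal M_gt0)); rewrite mnmE ndvd_Mk.
Qed.

Lemma mcoeff_exp_sub_prodX (R : comRingType) n (p : {mpoly R[n]}) (c : R) P :
  ((p - c *: \prod_(i < n) 'X_i) ^+ P)@_[multinom P | i < n] =
  \sum_(k < P.+1) (p ^+ k)@_[multinom k | i < n] * (- c) ^+ (P - k) *+ 'C(P, k).
Proof.
rewrite addrC exprDn raddf_sum /=; apply: eq_bigr => k _.
have prodXE e : (\prod_(i < n) 'X_i) ^+ e = 'X_[[multinom e | i < n]] :> {mpoly R[n]}.
  by rewrite -prodrXl mpolyXE_id; apply: eq_bigr => i _; rewrite mnmE.
have -> : [multinom P | _ < n] = ([multinom (P - k)%N | _ < n] + [multinom k | _ < n])%MM.
  by apply/mnmP => i; rewrite mnmDE !mnmE subnK // -ltnS.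
by rewrite -scaleNr exprZn -scalerAl mcoeffMn mcoeffZ prodXE [_ * p ^+ k]mulrC mcoeffMX mulrC.
Qed.

Lemma HD_evalE (R : comRingType) (P M : nat) (x : R) :
  HD_eval P M x =
  \sum_(i < (P %/ M).+1) (multibinom P M i)%:R * (- M%:R) ^+ (P - i * M) * x ^+ (i * M).
Proof.
rewrite /HD_eval /HD raddf_sum horner_sum; apply: eq_bigr => i _.
by rewrite /= map_polyZ map_polyXn hornerZ hornerXn rmorphM rmorphXn rmorphN /= -!pmulrn.
Qed.

Lemma big_ord_dvdn (V : nmodType) (M P : nat) (F : nat -> V) : (0 < M)%N ->
  \sum_(k < P.+1 | (M %| k)%N) F k = \sum_(i < (P %/ M).+1) F (i * M)%N.
Proof.
move=> M_gt0; elim: P => [|P IHP].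
  by rewrite div0n big_mkcond !big_ord1 dvdn0 mul0n.
rewrite big_mkcond big_ord_recr /= -big_mkcond IHP divnS //.
case: ifP => [dvd_MP | _]; last by rewrite addr0.
have PE : ((P %/ M).+1 * M = P.+1)%N by rewrite -(divnK dvd_MP) divnS // dvd_MP.
by rewrite add1n [RHS]big_ord_recr /= PE.
Qed.

Theorem lemma3p8 (R : comRingType) (N P : nat) (lambda : R) :
  (2 <= N)%N ->
  HD_eval P N.+1 lambda =
  ((lambda *: \sum_(i < N.+1) ('X_i : {mpoly R[N.+1]}) ^+ N.+1
     - N.+1%:R *: \prod_(i < N.+1) ('X_i : {mpoly R[N.+1]})) ^+ P)
    @_[multinom P | i < N.+1].
Proof.
move=> _.
pose F k := lambda ^+ k * (multibinom k N.+1 (k %/ N.+1))%:R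
            * (- N.+1%:R) ^+ (P - k) *+ 'C(P, k).
transitivity (\sum_(k < P.+1 | (N.+1 %| k)%N) F k).
  rewrite HD_evalE big_ord_dvdn //; apply: eq_bigr => i _.
  have le_iMP : (i * N.+1 <= P)%N by rewrite -leq_divRL // -ltnS.
  by rewrite /F mulnK // multibinom_split // natrM -mulr_natr; ring.
rewrite mcoeff_exp_sub_prodX big_mkcond; apply: eq_bigr => k _.
by rewrite exprZn mcoeffZ mcoeff_power_sum_diag //; case: ifP; rewrite ?mulr0 ?mul0r ?mul0rn.
Qed.
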